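(* Let $n$ be a positive integer, $k\ge 2$ an integer, and $\beta,\alpha_0,\alpha_1,\dots,\alpha_{n-1}$ non-negative integers with $0\le\beta\le k-1$. Then $$\det_{0\le i,j\le n-1}\bigl(C_{(k-1)\alpha_i+j+\beta,k}\bigr)=\prod_{0\le i<j\le n-1}(\alpha_j-\alpha_i)\prod_{i=0}^{n-1}\frac{((k-1)i+\beta+n)!\,(k\alpha_i+\beta)!}{(ki+\beta)!\,\alpha_i!\,((k-1)\alpha_i+\beta+n)!}.$$
   Context: For integers $k\ge2$ and $m\ge0$, the generalised Catalan number is $$C_{m,k}=\frac{m-(k-1)\lfloor\frac{m}{k-1}\rfloor+1}{m+\lfloor\frac{m}{k-1}\rfloor+1}\binom{m+\lfloor\frac{m}{k-1}\rfloor+1}{m+1}.$$ (Equivalently, $C_{m,k}$ is the number of lattice paths with unit steps $(1,0)$ and $(0,1)$ from $(0,0)$ to $(m,\lfloor m/(k-1)\rfloor)$ never passing above the line $x=(k-1)y$.) *)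

From mathcomp Require Import all_boot all_order all_algebra.
Set Implicit Arguments. Unset Strict Implicit. Unset Printing Implicit Defensive.
Import GRing.Theory Num.Theory.
Local Open Scope ring_scope.

(* Note m - (k-1) q >= 0, so the truncated nat subtraction is exact. *)
Definition gcat (m k : nat) : rat :=
  let q := (m %/ (k.-1))%N in
  ((m - k.-1 * q + 1)%N)%:R / ((m + q + 1)%N)%:R * ('C(m + q + 1, m + 1))%:R.

From mathcomp Require Import all_boot all_order all_algebra.
From mathcomp Require Import zify ring.
Set Implicit Arguments. Unset Strict Implicit. Unset Printing Implicit Defensive.
Import GRing.Theory Num.Theory.
Local Open Scope ring_scope.

(** Writing [m = (k-1) a + j + b], the entry [C_{m,k}] factors as a weight
    depending only on the row index [a] times [P_j(a)], where [P_j] is a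
    polynomial of degree [< n]: the factorials of [C_{m,k}] telescope, and the
    integers in [(b, b + j + floor((j+b)/(k-1))]] split into the multiples of
    [k] and the first [j] non-multiples of [k] above [b].  Hence the
    determinant is the product of the weights, times the Vandermonde
    determinant of the [alpha_i], times the determinant of the coefficients of
    the [P_j].  The latter is independent of [alpha]; it is computed by
    evaluating the [P_j] at the nodes [-d_i / k], where [d_i] is the [i]-th
    non-multiple of [k] above [b]: there the evaluation matrix is
    triangular. *)

Lemma natr_fact_add (R : pzSemiRingType) c m n : (m <= n)%N ->
  ((c + n)`!)%:R = ((c + m)`!)%:R * \prod_(m <= s < n) ((c + s).+1)%:R :> R.
Proof.
elim: n => [|n IHn]; first by rewrite leqn0 => /eqP->; rewrite big_geq ?mulr1.
rewrite leq_eqVlt => /orP[/eqP-> | lemn]; first by rewrite big_geq ?mulr1.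
by rewrite big_nat_recr //= addnS factS natrM IHn // mulr_natl mulr_natr mulrnAr.
Qed.

Lemma natr_fact_neq0 (R : numDomainType) n : (n`!)%:R != 0 :> R.
Proof. by rewrite pnatr_eq0 -lt0n fact_gt0. Qed.

Lemma gcatE m k :
  gcat m k = ((m - k.-1 * (m %/ k.-1)).+1 * (m + m %/ k.-1)`!)%:R
             / ((m.+1)`! * (m %/ k.-1)`!)%:R.
Proof.
rewrite /gcat; set q := (m %/ k.-1)%N; rewrite !addn1.
have binE : ('C((m + q).+1, m.+1))%:R
            = ((m + q).+1`!)%:R / ((m.+1)`! * q`!)%:R :> rat.
  rewrite -(@bin_fact (m + q).+1 m.+1) ?ltnS ?leq_addr // subSS addnC addnK.
  by rewrite natrM mulfK // natrM mulf_neq0 ?natr_fact_neq0.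
rewrite binE factS !natrM mulrA [X in X / _]mulrA mulfVK //.
by rewrite pnatr_eq0.
Qed.

Lemma size_prod_linear (R : nzRingType) (I : Type) (r : seq I) (c d : I -> R) :
  (size (\prod_(i <- r) ((c i)%:P * 'X + (d i)%:P))%R <= (size r).+1)%N.
Proof.
elim: r => [|i r IHr]; first by rewrite big_nil size_poly1.
rewrite big_cons (leq_trans (size_polyMleq _ _)) //.
have : (size ((c i)%:P * 'X + (d i)%:P)%R <= 2)%N.
  by rewrite size_MXaddC; case: ifP => // _; rewrite ltnS size_polyC_leq1.
move: IHr => /=; lia.
Qed.

Lemma vandermonde_prod_neq0 (R : idomainType) n (x : 'I_n -> R) :
  injective x -> \prod_(i < n) \prod_(j < n | (i < j)%N) (x j - x i) != 0.
Proof.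
move=> x_inj; rewrite prodf_seq_neq0; apply/allP => i _.
rewrite prodf_seq_neq0; apply/allP => j _; apply/implyP => lt_ij.
by rewrite subr_eq0 (inj_eq x_inj) -val_eqE gtn_eqF.
Qed.

Lemma det_mx_horner (R : comNzRingType) n (P : 'I_n -> {poly R}) (x : 'I_n -> R) :
  (forall j, (size (P j) <= n)%N) ->
  \det (\matrix_(i < n, j < n) (P j).[x i])
  = (\prod_(i < n) \prod_(j < n | (i < j)%N) (x j - x i))
    * \det (\matrix_(l < n, j < n) (P j)`_l).
Proof.
move=> size_P.
have -> : \matrix_(i < n, j < n) (P j).[x i]
          = (Vandermonde n (\row_i x i))^T *m \matrix_(l < n, j < n) (P j)`_l.
  apply/matrixP => i j; rewrite !mxE (horner_coef_wide _ (size_P j)).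
  by apply: eq_bigr => l _; rewrite !mxE mulrC.
rewrite det_mulmx det_tr det_Vandermonde; congr (_ * _).
by apply: eq_bigr => i _; apply: eq_bigr => j _; rewrite !mxE.
Qed.

Section CatalanRows.

Variables (k b n : nat).
Hypotheses (k_gt1 : (1 < k)%N) (b_le : (b <= k.-1)%N).

Let k_pred : k = k.-1.+1. Proof. by rewrite prednK // ltnW. Qed.
Let k1_gt0 : (0 < k.-1)%N. Proof. by rewrite -ltnS -k_pred. Qed.

Definition quob j := ((j + b) %/ k.-1)%N.
Definition modb j := ((j + b) %% k.-1)%N.

(** [nonmul i] is the [i]-th integer above [b] that is not a multiple of [k]. *)
Definition nonmul i := (b + i + 1 + quob i)%N.

Lemma divn_modb j : (j + b = quob j * k.-1 + modb j)%N.
Proof. exact: divn_eq. Qed.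

Lemma modb_lt j : (modb j < k.-1)%N.
Proof. exact: ltn_pmod. Qed.

Lemma quob_succ j :
  quob j.+1 = if (modb j).+1 == k.-1 then (quob j).+1 else quob j.
Proof.
rewrite /quob addSn {1}(divn_modb j) -addnS divnMDl //.
case: eqP => [-> | ne]; first by rewrite divnn k1_gt0 addn1.
by rewrite divn_small ?addn0 // ltn_neqAle (introN eqP ne) modb_lt.
Qed.

Lemma prod_above_split (R : comPzSemiRingType) (F : nat -> R) j :
  \prod_(l < j + quob j) F (b + l + 1)%N
  = \prod_(m < j) F (nonmul m) * \prod_(i < quob j) F (k * i.+1)%N.
Proof.
elim: j => [|j IHj].
  rewrite big_ord0 mul1r /quob !add0n.
  have [b_lt | ->] : (b < k.-1)%N \/ b = k.-1 by lia.
    by rewrite divn_small // !big_ord0.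
  by rewrite divnn k1_gt0 !big_ord1 /=; congr F; lia.
have := divn_modb j; have := modb_lt j.
rewrite quob_succ; case: eqP => [carry | _] lt_mod divE.
  rewrite addSn addnS !big_ord_recr /= IHj -!mulrA; congr (_ * _).
  rewrite mulrCA; congr (_ * (_ * F _)); last by rewrite k_pred; nia.
  by congr F; rewrite /nonmul; lia.
rewrite !big_ord_recr IHj mulrAC; congr (_ * F _).
by change (b + (j + quob j) + 1 = nonmul j)%N; rewrite /nonmul; lia.
Qed.

Definition lead_const j := ((modb j).+1 * k ^ quob j)%N.

Lemma lead_const_prod s :
  (lead_const s)%:R * \prod_(i < s) ((k * (b + s.+1))%:R - (k.-1 * nonmul i)%:R)
  = \prod_(i < s.+1) ((k.-1 * i + b + s.+1)%:R : rat).
Proof.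
(* Split [b+1 .. b+s+q] as in [prod_above_split]: the multiples of [k]
   contribute [k ^ q] times a product that telescopes against the top [q]
   factors. *)
rewrite /lead_const; set q := quob s; set r := modb s.
have divE := divn_modb s; have lt_r := modb_lt s.
pose F v : rat := (k * (b + s.+1))%:R - (k.-1 * v)%:R.
pose G i := (k.-1 * i + b + s.+1)%N.
pose H t := (k.-1 * (q - t) + r.+1)%N.
have FE v w : (k * (b + s.+1) = k.-1 * v + w)%N -> F v = w%:R.
  by move=> E; rewrite /F E natrD addrC addKr.
have := prod_above_split F s; rewrite -/q big_split_ord /=.
have -> : \prod_(l < s) F (b + l + 1)%N = \prod_(l < s) (G (s - l)%N)%:R.
  apply: eq_bigr => l _; apply: FE; have := ltn_ord l; rewrite /G k_pred; nia.
have -> : \prod_(i < q) F (b + (s + i) + 1)%N = \prod_(i < q) (H i)%:R.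
  apply: eq_bigr => i _; apply: FE; have := ltn_ord i; rewrite /H k_pred; nia.
have -> : \prod_(i < q) F (k * i.+1)%N = (k ^ q)%:R * \prod_(i < q) (H i.+1)%:R.
  rewrite natrX -[q in _ ^+ q]card_ord -prodr_const -big_split /=.
  apply: eq_bigr => i _; rewrite -natrM; apply: FE.
  have := ltn_ord i; rewrite /H k_pred; nia.
have H_telescope : \prod_(i < q) (H i)%:R * (H q)%:R
                   = (H 0)%:R * \prod_(i < q) (H i.+1)%:R :> rat.
  by transitivity (\prod_(i < q.+1) (H i)%:R : rat);
    [rewrite big_ord_recr | rewrite big_ord_recl].
have H_neq0 : \prod_(i < q) (H i.+1)%:R != 0 :> rat.
  by rewrite prodf_seq_neq0; apply/allP => i _; rewrite pnatr_eq0 /H addnS.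
move=> splitE.
rewrite [RHS](reindex_inj rev_ord_inj) big_ord_recr /=.
apply: (mulIf H_neq0).
have -> : (r.+1 = H q)%N by rewrite /H subnn muln0.
have -> : (k.-1 * (s.+1 - s.+1) + b + s.+1 = H 0)%N by rewrite /H subnn; lia.
have -> : \prod_(i < s) (k.-1 * (s.+1 - i.+1) + b + s.+1)%:R
          = \prod_(i < s) (G (s - i)%N)%:R :> rat.
  by apply: eq_bigr => i _; rewrite subSS.
rewrite natrM -[RHS]mulrA -H_telescope mulrA splitE /F; ring.
Qed.

Definition catalan_poly j : {poly rat} :=
  (lead_const j)%:R%:P
  * \prod_(m < j) ((k%:R)%:P * 'X + (nonmul m)%:R%:P)
  * \prod_(j.+1 <= s < n) ((k.-1%:R)%:P * 'X + (b + s.+1)%:R%:P).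

Lemma horner_catalan_poly j x :
  (catalan_poly j).[x]
  = (lead_const j)%:R * \prod_(m < j) (k%:R * x + (nonmul m)%:R)
    * \prod_(j.+1 <= s < n) (k.-1%:R * x + (b + s.+1)%:R).
Proof.
rewrite /catalan_poly !hornerM hornerC !horner_prod.
by congr (_ * _ * _); apply: eq_bigr => i _; rewrite hornerMXaddC hornerC mulrC.
Qed.

Definition weight a : rat :=
  ((k * a + b)`!)%:R / (a`! * (k.-1 * a + b + n)`!)%:R.

Lemma gcat_factor a j : (j < n)%N ->
  gcat (k.-1 * a + j + b) k = weight a * (catalan_poly j).[a%:R].
Proof.
move=> lt_jn; set m := (k.-1 * a + j + b)%N; set q := quob j.
have quo_m : (m %/ k.-1 = a + q)%N by rewrite /m -addnA mulnC divnMDl.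
have mod_m : (m - k.-1 * (a + q) = modb j)%N.
  by rewrite /m -addnA divn_modb -/q; nia.
rewrite gcatE quo_m mod_m horner_catalan_poly /weight /lead_const -/q.
set Q := \prod_(i < j) _; set R := \prod_(_ <= s < n) _.
set Pa := \prod_(i < q) ((a + i).+1)%:R : rat.
have fact_top : ((m + (a + q))`!)%:R = ((k * a + b)`!)%:R * Q * (k ^ q)%:R * Pa.
  have -> : (m + (a + q) = k * a + b + (j + q))%N by rewrite /m k_pred; lia.
  rewrite (natr_fact_add _ (k * a + b) (leq0n (j + q))) addn0 big_mkord.
  rewrite -!mulrA; congr (_ * _).
  rewrite (eq_bigr (fun l : 'I_(j + q) => (k * a + (b + l + 1))%:R)); last first.
    by move=> l _; congr _%:R; lia.
  rewrite (prod_above_split (fun v => (k * a + v)%:R)); congr (_ * _).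
    by apply: eq_bigr => i _; rewrite natrD natrM.
  rewrite natrX -[q in _ ^+ q]card_ord -prodr_const -big_split /=.
  by apply: eq_bigr => i _; rewrite -natrM -mulnDr addnS.
have fact_bot : ((a + q)`!)%:R = (a`!)%:R * Pa.
  by rewrite (natr_fact_add _ _ (leq0n _)) addn0 big_mkord.
have fact_mid : ((k.-1 * a + b + n)`!)%:R = ((m.+1)`!)%:R * R.
  rewrite (natr_fact_add _ _ lt_jn); congr (_%:R * _).
    by congr (_`!); rewrite /m; lia.
  by apply: eq_bigr => s _; rewrite -natrM -natrD; congr _%:R; lia.
rewrite (natrM _ (modb j).+1) (natrM _ (m.+1)`!) (natrM _ a`!).
rewrite fact_top fact_bot fact_mid; field.
rewrite !natr_fact_neq0 !prodf_seq_neq0 /=.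
by apply/andP; split; apply/allP => i _; rewrite -?natrM -?natrD pnatr_eq0 ?addnS.
Qed.

Lemma size_catalan_poly j : (j < n)%N -> (size (catalan_poly j) <= n)%N.
Proof.
move=> lt_jn.
rewrite /catalan_poly.
rewrite -(big_mkord xpredT (fun m => (k%:R)%:P * 'X + (nonmul m)%:R%:P)).
set C := _%:P; set Q := \prod_(0 <= m < j) _; set P := \prod_(j.+1 <= s < n) _.
have size_C : (size C <= 1)%N := size_polyC_leq1 _.
have size_Q : (size Q <= j.+1)%N.
  apply: leq_trans (size_prod_linear _ _ _) _.
  by rewrite /index_iota size_iota subn0.
have size_P : (size P <= (n - j.+1).+1)%N.
  by apply: leq_trans (size_prod_linear _ _ _) _; rewrite /index_iota size_iota.
have := size_polyMleq C Q; have := size_polyMleq (C * Q) P; lia.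
Qed.

Definition node i : rat := - (nonmul i)%:R / k%:R.

Lemma mulk_node i : k%:R * node i = - (nonmul i)%:R.
Proof. by rewrite /node mulrC divfK // pnatr_eq0 -lt0n ltnW. Qed.

Lemma nonmul_lt i j : (i < j)%N -> (nonmul i < nonmul j)%N.
Proof.
move=> lt_ij; have := @leq_div2r k.-1 (i + b) (j + b).
by rewrite /nonmul /quob; lia.
Qed.

Lemma node_inj : injective node.
Proof.
move=> i j /(congr1 (fun x => - (k%:R * x))); rewrite !mulk_node !opprK.
move=> /eqP; rewrite eqr_nat => /eqP E.
by have [/nonmul_lt | /nonmul_lt | //] := ltngtP i j; rewrite E ltnn.
Qed.

Lemma catalan_poly_node_lt i j : (i < j)%N -> (catalan_poly j).[node i] = 0.
Proof.
move=> lt_ij; rewrite horner_catalan_poly (bigD1 (Ordinal lt_ij)) //=.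
by rewrite mulk_node addNr mul0r mulr0 mul0r.
Qed.

Lemma prod_lead_const :
  \prod_(s < n) ((lead_const s)%:R
     * \prod_(i < n | (i < s)%N) ((k * (b + s.+1))%:R - (k.-1 * nonmul i)%:R))
  = \prod_(i < n) (((k.-1 * i + b + n)`!)%:R / ((k * i + b)`!)%:R : rat).
Proof.
rewrite (eq_bigr (fun s : 'I_n =>
  \prod_(i < n | (i <= s)%N) (k.-1 * i + b + s.+1)%:R : rat)).
  rewrite (exchange_big_dep xpredT) //=; apply: eq_bigr => i _.
  rewrite (natr_fact_add _ (k.-1 * i + b) (ltnW (ltn_ord i))) big_geq_mkord /=.
  have -> : (k.-1 * i + b + i = k * i + b)%N by rewrite k_pred; lia.
  by rewrite mulrC mulKf ?natr_fact_neq0 //; apply: eq_bigr => s _; rewrite addnS.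
move=> s _; rewrite (big_ord_narrow (ltnW (ltn_ord s))) /= lead_const_prod.
by rewrite (big_ord_narrow (ltn_ord s)).
Qed.

Lemma prod_catalan_poly_node :
  \prod_(i < n) (catalan_poly i).[node i]
  = (\prod_(i < n) \prod_(j < n | (i < j)%N) (node j - node i))
    * \prod_(s < n) ((lead_const s)%:R
        * \prod_(i < n | (i < s)%N) ((k * (b + s.+1))%:R - (k.-1 * nonmul i)%:R)).
Proof.
pose B i s := k.-1%:R * node i + (b + s.+1)%:R.
have diagE (i : 'I_n) : (catalan_poly i).[node i]
    = (lead_const i)%:R * \prod_(m < n | (m < i)%N) (k%:R * (node i - node m))
      * \prod_(s < n | (i < s)%N) B i s.
  rewrite horner_catalan_poly (big_ord_narrow (ltnW (ltn_ord i))).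
  rewrite big_geq_mkord /=.
  by congr (_ * _ * _); apply: eq_bigr => m _; rewrite mulrBr !mulk_node opprK.
have vandermondeE :
    \prod_(i < n) \prod_(m < n | (m < i)%N) (k%:R * (node i - node m))
    = \prod_(i < n) \prod_(j < n | (i < j)%N) k%:R
      * \prod_(i < n) \prod_(j < n | (i < j)%N) (node j - node i).
  rewrite (exchange_big_dep xpredT) //= -big_split; apply: eq_bigr => i _.
  by rewrite -big_split.
have pairE : \prod_(i < n) \prod_(j < n | (i < j)%N) k%:R
              * \prod_(i < n) \prod_(s < n | (i < s)%N) B i s
    = \prod_(s < n) \prod_(i < n | (i < s)%N)
        ((k * (b + s.+1))%:R - (k.-1 * nonmul i)%:R).
  rewrite -big_split (exchange_big_dep xpredT) //=; apply: eq_bigr => s _.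
  rewrite -big_split; apply: eq_bigr => i _.
  by rewrite /B [LHS]/= mulrDr mulrCA mulk_node !natrM mulrN addrC.
rewrite (eq_bigr _ (fun i _ => diagE i)) !big_split /= vandermondeE -pairE.
ring.
Qed.

Lemma det_catalan_poly_coef :
  \det (\matrix_(l < n, j < n) (catalan_poly j)`_l)
  = \prod_(i < n) (((k.-1 * i + b + n)`!)%:R / ((k * i + b)`!)%:R).
Proof.
have := det_mx_horner (fun i : 'I_n => node i)
                      (fun j => size_catalan_poly (ltn_ord j)).
rewrite det_trig; last first.
  by apply/is_trig_mxP => i j lt_ij; rewrite mxE catalan_poly_node_lt.
under eq_bigr do rewrite mxE.
rewrite prod_catalan_poly_node prod_lead_const.
by move=> /(mulfI (vandermonde_prod_neq0 (inj_comp node_inj val_inj))).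
Qed.

End CatalanRows.

Theorem theorem6 (n k beta : nat) (alpha : 'I_n -> nat)
  (hn : (0 < n)%N) (hk : (2 <= k)%N) (hbeta : (beta <= k - 1)%N) :
  \det (\matrix_(i < n, j < n) gcat ((k - 1) * alpha i + j + beta) k)
  = (\prod_(i < n) \prod_(j < n | (i < j)%N)
        ((alpha j)%:R - (alpha i)%:R : rat))
    * \prod_(i < n)
        ((((k - 1) * i + beta + n)`!)%:R * ((k * alpha i + beta)`!)%:R
         / (((k * i + beta)`!)%:R * ((alpha i)`!)%:R
            * (((k - 1) * alpha i + beta + n)`!)%:R)).
Proof.
rewrite !subn1 in hbeta *.
have -> : \matrix_(i < n, j < n) gcat (k.-1 * alpha i + j + beta) k
          = diag_mx (\row_i weight k beta n (alpha i))
            *m \matrix_(i < n, j < n) (catalan_poly k beta n j).[(alpha i)%:R].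
  apply/matrixP => i j.
  by rewrite mul_diag_mx !mxE (gcat_factor hk hbeta _ (ltn_ord j)).
rewrite det_mulmx det_diag.
rewrite (det_mx_horner _ (fun j => size_catalan_poly hk hbeta (ltn_ord j))).
rewrite det_catalan_poly_coef // mulrCA -big_split /=; congr (_ * _).
by apply: eq_bigr => i _; rewrite mxE /weight !natrM !invfM; ring.
Qed.
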